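(* For every coalition $C$ and every formula $\phi\in\Phi$, $\vdash \neg\mathsf{H}_C\phi\to\mathsf{K}_C\neg\mathsf{H}_C\phi$.
   Context: Fix a set of agents $\mathcal{A}$; a coalition is a subset of $\mathcal{A}$. The language $\Phi$: $\phi ::= p \mid \neg\phi \mid \phi\to\phi \mid \mathsf{K}_C\phi \mid \mathsf{H}_C\phi$ ($p$ propositional variable, $C\subseteq\mathcal{A}$). Axioms: propositional tautologies; Truth $\mathsf{K}_C\phi\to\phi$; Negative Introspection $\neg\mathsf{K}_C\phi\to\mathsf{K}_C\neg\mathsf{K}_C\phi$; Distributivity $\mathsf{K}_C(\phi\to\psi)\to(\mathsf{K}_C\phi\to\mathsf{K}_C\psi)$; Monotonicity $\mathsf{K}_C\phi\to\mathsf{K}_D\phi$ for $C\subseteq D$; Strategic Positive Introspection $\mathsf{H}_C\phi\to\mathsf{K}_C\mathsf{H}_C\phi$; Cooperation $\mathsf{H}_C(\phi\to\psi)\to(\mathsf{H}_D\phi\to\mathsf{H}_{C\cup D}\psi)$ for $C\cap D=\varnothing$; Empty Coalition $\mathsf{K}_\varnothing\phi\to\mathsf{H}_\varnothing\phi$; Perfect Recall $\mathsf{H}_D\phi\to\mathsf{H}_D\mathsf{K}_C\phi$ for $D\subseteq C\neq\varnothing$; Unachievability of Falsehood $\neg\mathsf{H}_C\bot$. Rules: Necessitation ($\phi/\mathsf{K}_C\phi$), Strategic Necessitation ($\phi/\mathsf{H}_C\phi$), Modus Ponens. $\vdash\phi$ means $\phi$ is derivable. *)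

Set Implicit Arguments.

Section Logic.
Variable Agent : Type.

Definition coalition := Agent -> Prop.
Definition csubset (C D : coalition) : Prop := forall a, C a -> D a.
Definition cunion (C D : coalition) : coalition := fun a => C a \/ D a.
Definition cdisjoint (C D : coalition) : Prop := forall a, C a -> D a -> False.
Definition cempty : coalition := fun _ => False.
Definition cnonempty (C : coalition) : Prop := exists a, C a.

Inductive form : Type :=
| Var : nat -> form
| Neg : form -> form
| Imp : form -> form -> form
| Kn : coalition -> form -> form
| Hw : coalition -> form -> form.

Definition Bot : form := Neg (Imp (Var 0) (Var 0)).

(* propositional evaluation, treating modal formulas as atoms *)
Fixpoint peval (v : form -> bool) (f : form) : bool :=
  match f with
  | Var _ => v f
  | Neg g => negb (peval v g)
  | Imp g h => orb (negb (peval v g)) (peval v h)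
  | Kn _ _ => v f
  | Hw _ _ => v f
  end.

Definition tautology (f : form) : Prop := forall v, peval v f = true.

Inductive derivable : form -> Prop :=
| ax_taut : forall f, tautology f -> derivable f
| ax_truth : forall C f, derivable (Imp (Kn C f) f)
| ax_negintro : forall C f,
    derivable (Imp (Neg (Kn C f)) (Kn C (Neg (Kn C f))))
| ax_distr : forall C f g,
    derivable (Imp (Kn C (Imp f g)) (Imp (Kn C f) (Kn C g)))
| ax_mono : forall C D f, csubset C D -> derivable (Imp (Kn C f) (Kn D f))
| ax_spi : forall C f, derivable (Imp (Hw C f) (Kn C (Hw C f)))
| ax_coop : forall C D f g, cdisjoint C D ->
    derivable (Imp (Hw C (Imp f g)) (Imp (Hw D f) (Hw (cunion C D) g)))
| ax_empty : forall f, derivable (Imp (Kn cempty f) (Hw cempty f))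
| ax_recall : forall C D f, csubset D C -> cnonempty C ->
    derivable (Imp (Hw D f) (Hw D (Kn C f)))
| ax_unach : forall C, derivable (Neg (Hw C Bot))
| r_nec : forall C f, derivable f -> derivable (Kn C f)
| r_snec : forall C f, derivable f -> derivable (Hw C f)
| r_mp : forall f g, derivable f -> derivable (Imp f g) -> derivable g.

End Logic.

(* Contrapose Truth to get ¬H_C φ → ¬K_C H_C φ, apply Negative Introspection to reach
   K_C ¬K_C H_C φ, and finish by pushing the contrapositive of Strategic Positive
   Introspection, ¬K_C H_C φ → ¬H_C φ, under K_C. *)

Section DerivedRules.
Context {Agent : Type}.

Lemma derivable_contrapose {a b : form Agent} :
  derivable (Imp a b) -> derivable (Imp (Neg b) (Neg a)).
Proof.
  intro hab. apply (r_mp hab), ax_taut; intro v; simpl.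
  destruct (peval v a), (peval v b); reflexivity.
Qed.

Lemma derivable_imp_trans {a b c : form Agent} :
  derivable (Imp a b) -> derivable (Imp b c) -> derivable (Imp a c).
Proof.
  intros hab hbc. apply (r_mp hbc), (r_mp hab), ax_taut; intro v; simpl.
  destruct (peval v a), (peval v b), (peval v c); reflexivity.
Qed.

Lemma derivable_Kn_imp (C : coalition Agent) {a b : form Agent} :
  derivable (Imp a b) -> derivable (Imp (Kn C a) (Kn C b)).
Proof. intro hab. exact (r_mp (r_nec C hab) (ax_distr C a b)). Qed.

End DerivedRules.

Theorem lemma7 (Agent : Type) (C : coalition Agent) (phi : form Agent) :
  derivable (Imp (Neg (Hw C phi)) (Kn C (Neg (Hw C phi)))).
Proof.
  apply (derivable_imp_trans (derivable_contrapose (ax_truth C (Hw C phi)))).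
  apply (derivable_imp_trans (ax_negintro C (Hw C phi))).
  exact (derivable_Kn_imp C (derivable_contrapose (ax_spi C phi))).
Qed.
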